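(* There exist constants $c>0$ and $b>1$ such that for every even $n\ge 2$ there exist a zero-one knapsack instance with $n$ items (positive integer weights $w_i$, integer profits $v_i$) and a capacity $W$ such that the number of optimal solutions with capacity $W$ is at least $c\,b^n$ (i.e. exponential in $n$), whereas with capacity $W'=W+1$ the instance has exactly one optimal solution.
   Context: For a zero-one knapsack instance with items $[n]=\{1,\dots,n\}$ and capacity $W$, for $s\subseteq[n]$ let $w(s)=\sum_{i\in s}w_i$ and $v(s)=\sum_{i\in s}v_i$. The feasible solutions are $\mathcal{S}=\{s\subseteq[n]: w(s)\le W\}$, and the optimal solutions are $\mathcal{S}^*=\{s\in\mathcal{S}: v(s)=\max_{t\in\mathcal{S}}v(t)\}$. *)

From mathcomp Require Import all_boot.
From mathcomp Require Import all_algebra.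
Set Implicit Arguments. Unset Strict Implicit. Unset Printing Implicit Defensive.
Import GRing.Theory Num.Theory.

(* Zero-one knapsack over items 'I_n (= {1..n} shifted to {0..n-1}). *)
Definition weight n (w : 'I_n -> nat) (s : {set 'I_n}) : nat := \sum_(i in s) w i.
Definition profit n (v : 'I_n -> int) (s : {set 'I_n}) : int := (\sum_(i in s) v i)%R.

Definition feasible n (w : 'I_n -> nat) (W : nat) : {set {set 'I_n}} :=
  [set s | weight w s <= W].

Definition optimal n (w : 'I_n -> nat) (v : 'I_n -> int) (W : nat)
  : {set {set 'I_n}} :=
  [set s in feasible w W | [forall t in feasible w W, (profit v t <= profit v s)%R]].

From mathcomp Require Import all_boot all_order all_algebra.
From Stdlib Require Import Reals Lra.

(** One heavy item of weight [n] and profit 1, together with [n - 1] light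
    items of weight 1 and profit 0.  With capacity [n - 1] the heavy item does
    not fit, every feasible set has profit 0, and the feasible sets are exactly
    the [2 ^ (n - 1)] sets of light items, all of them optimal.  With capacity
    [n] the singleton of the heavy item is the only set of profit 1. *)

Import Order.TTheory GRing.Theory Num.Theory.

Section OptimalSolutions.

Variables (n : nat) (w : 'I_n -> nat) (v : 'I_n -> int) (W : nat).
Local Open Scope ring_scope.

Lemma optimal_eq_feasible :
  {in feasible w W &, forall s t, profit v s = profit v t} ->
  optimal w v W = feasible w W.
Proof.
move=> profit_const; apply/setP=> s; rewrite inE.
case: (boolP (s \in feasible w W)) => //= s_feas.
by apply/forall_inP=> t t_feas; rewrite (profit_const t s).
Qed.

Lemma optimal_eq_set1 s0 :
  s0 \in feasible w W ->
  {in feasible w W, forall t, t != s0 -> profit v t < profit v s0} ->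
  optimal w v W = [set s0].
Proof.
move=> s0_feas s0_best; apply/setP=> s; rewrite /optimal in_set in_set1.
apply/andP/eqP => [[s_feas /forall_inP s_opt] | ->].
  apply/eqP; apply: contraTT (s_opt s0 s0_feas) => s_neq_s0.
  by rewrite -ltNge; apply: s0_best.
split=> //; apply/forall_inP=> t t_feas.
by have [-> | /(s0_best t t_feas) /ltW] := eqVneq t s0.
Qed.

End OptimalSolutions.

Lemma subsetC1 (T : finType) (A : {set T}) (x : T) :
  (A \subset [set~ x]) = (x \notin A).
Proof. by rewrite subsetC sub1set inE. Qed.

Lemma INR_expn m k : INR (expn m k) = (INR m ^ k)%R.
Proof. by elim: k => [|k IHk] //; rewrite expnS mult_INR IHk. Qed.

Section HeavyItemInstance.

Variable n' : nat.
Local Notation n := n'.+1.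

Definition heavy_weight (i : 'I_n) : nat := if i == ord0 then n else 1.
Definition heavy_profit (i : 'I_n) : int := Posz (i == ord0).

Lemma weight_heavy_notin (s : {set 'I_n}) :
  ord0 \notin s -> weight heavy_weight s = #|s|.
Proof.
move=> s0; rewrite /weight -sum1_card; apply: eq_bigr => i si.
by rewrite /heavy_weight; case: eqP si => // ->; rewrite (negbTE s0).
Qed.

Lemma weight_heavy_in (s : {set 'I_n}) :
  ord0 \in s -> weight heavy_weight s = n + #|s :\ ord0|.
Proof.
move=> s0; rewrite /weight (big_setD1 _ s0) -/(weight _ _).
by rewrite weight_heavy_notin ?setD11 // /heavy_weight eqxx.
Qed.

Lemma profit_heavy (s : {set 'I_n}) : profit heavy_profit s = Posz (ord0 \in s).
Proof.
have profit_light (t : {set 'I_n}) : ord0 \notin t -> profit heavy_profit t = Posz 0.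
  move=> t0; rewrite /profit big1 // => i ti.
  by rewrite /heavy_profit; case: eqP ti => // ->; rewrite (negbTE t0).
case: (boolP (ord0 \in s)) => [s0 | /profit_light //].
by rewrite /profit (big_setD1 _ s0) -/(profit _ _) profit_light ?setD11.
Qed.

Lemma feasible_heavy_tight : feasible heavy_weight n' = powerset [set~ ord0].
Proof.
apply/setP=> s; rewrite !inE subsetC1.
have [s0 | s0] /= := boolP (ord0 \in s).
  by apply/negbTE; rewrite weight_heavy_in // -ltnNge ltnS leq_addr.
rewrite weight_heavy_notin //; rewrite -subsetC1 in s0.
by have := subset_leq_card s0; rewrite cardsC1 card_ord.
Qed.

Lemma optimal_heavy_tight :
  optimal heavy_weight heavy_profit n' = powerset [set~ ord0].
Proof.
rewrite optimal_eq_feasible feasible_heavy_tight // => s t.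
by rewrite !inE !subsetC1 !profit_heavy => /negbTE-> /negbTE->.
Qed.

Lemma optimal_heavy_slack :
  optimal heavy_weight heavy_profit n = [set [set ord0]].
Proof.
apply: optimal_eq_set1 => [|t t_feas t_neq].
  by rewrite inE weight_heavy_in ?set11 // setDv cards0 addn0.
have t0 : ord0 \notin t.
  apply: contra t_neq => t0; move: t_feas.
  rewrite inE weight_heavy_in // -[leqRHS]addn0 leq_add2l leqn0 cards_eq0.
  by move=> /eqP t_light; rewrite -(setD1K t0) t_light setU0.
by rewrite !profit_heavy set11 (negbTE t0).
Qed.

End HeavyItemInstance.

Theorem theorem4 :
  exists (c b : R), (0 < c)%R /\ (1 < b)%R /\
  forall n : nat, 2 <= n -> ~~ odd n ->
    exists (w : 'I_n -> nat) (v : 'I_n -> int) (W : nat),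
      (forall i, 0 < w i) /\
      (c * b ^ n <= INR #|optimal w v W|)%R /\
      #|optimal w v W.+1| = 1.
Proof.
exists (/ 2)%R, 2%R; do 2 (split; first lra).
case=> [// | n'] _ _.
exists (heavy_weight n'), (heavy_profit n'), n'.
split; first by move=> i; rewrite /heavy_weight; case: eqP.
split; last by rewrite optimal_heavy_slack cards1.
have INR2 : INR 2 = 2%R by rewrite /=; lra.
rewrite optimal_heavy_tight card_powerset cardsC1 card_ord INR_expn INR2 /=.
lra.
Qed.
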